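(* Let $K_1, K_2, K_3 > 0$ and, for $h > 0$ and $j = 1,2,3$, let $\Omega_j(h) = \sqrt{K_j \tanh(K_j h)}$. There exists a positive and finite value of $h$ such that $\Omega_1(h) + \Omega_2(h) = \Omega_3(h)$ if and only if $$K_1 + K_2 < K_3 < \big(\sqrt{K_1} + \sqrt{K_2}\big)^2.$$ When this pair of inequalities is satisfied, the corresponding value of $h$ is unique.
   Context: Physically, $K_j$ are positive eigenvalue square roots (''wavenumbers'') of the negative horizontal Laplacian with Neumann boundary conditions on the cross-section of a cylinder, $h$ is the dimensionless fluid depth, and $\Omega_j(h)$ is the angular frequency given by the finite-depth gravity-wave dispersion relation $\Omega_j^2 = K_j\tanh(K_j h)$. The theorem is a purely real-analytic statement about these functions. *)

From Stdlib Require Import Reals.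
Open Scope R_scope.

Definition Omega (K h : R) : R := sqrt (K * tanh (K * h)).

(* Write Omega_j for Omega K_j h, so that Omega_j^2 = K_j tanh (K_j h).

   Necessity: a resonance forces K_j < K_3, and then "tanh is increasing" and
   "tanh x / x is decreasing" give (K_j / K_3) Omega_3 < Omega_j < sqrt (K_j tanh (K_3 h));
   summing over j = 1, 2 yields the two bounds on K_3.

   Existence: Omega_1 + Omega_2 - Omega_3 is negative for small h (where Omega_j is about
   K_j sqrt h) and positive for large h (where Omega_j is about sqrt K_j), so it vanishes by
   the intermediate value theorem.

   Uniqueness: for a < b, tanh (a h) / tanh (b h) increases with h because sinh t / t
   increases; hence (Omega_1 + Omega_2) / Omega_3 is strictly increasing in h and equals 1
   at most once. *)

From Stdlib Require Import Reals Ranalysis5 Lra Psatz.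
From Coquelicot Require Import Coquelicot.
Open Scope R_scope.
Set Bullet Behavior "Strict Subproofs".

Lemma MVT_lt (f f' : R -> R) (a b : R) : a < b ->
  (forall c, a <= c <= b -> is_derive f c (f' c)) ->
  (forall c, a < c < b -> 0 < f' c) -> f a < f b.
Proof.
intros hab hd hpos.
destruct (MVT_cor2 f f' a b hab) as [c [Hc hc]].
- intros c hc; apply is_derive_Reals, hd, hc.
- assert (0 < f' c * (b - a)) by (apply Rmult_lt_0_compat; [apply hpos|]; lra).
  lra.
Qed.

Lemma cosh_pos x : 0 < cosh x.
Proof. unfold cosh; pose proof (exp_pos x); pose proof (exp_pos (- x)); lra. Qed.

Lemma sinh_pos x : 0 < x -> 0 < sinh x.
Proof. intros hx; rewrite <- sinh_0; now apply sinh_lt. Qed.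

Lemma cosh_sq_sub_sinh_sq x : cosh x ^ 2 - sinh x ^ 2 = 1.
Proof. unfold cosh, sinh; rewrite exp_Ropp; pose proof (exp_pos x); field; lra. Qed.

Lemma sinh_double x : sinh (2 * x) = 2 * sinh x * cosh x.
Proof.
unfold cosh, sinh; rewrite !exp_Ropp.
replace (2 * x) with (x + x) by ring; rewrite exp_plus.
pose proof (exp_pos x); field; lra.
Qed.

Lemma cosh_gt_1 x : 0 < x -> 1 < cosh x.
Proof.
intros hx; pose proof (cosh_sq_sub_sinh_sq x); pose proof (sinh_pos x hx).
pose proof (cosh_pos x); nra.
Qed.

Lemma sinh_gt_id u : 0 < u -> u < sinh u.
Proof.
intros hu.
enough (0 - 0 < sinh u - u) by lra.
rewrite <- sinh_0 at 1.
apply (MVT_lt (fun t => sinh t - t) (fun t => cosh t - 1)); [lra| |].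
- intros c _; auto_derive; auto; ring.
- intros c hc; pose proof (cosh_gt_1 c ltac:(lra)); lra.
Qed.

Lemma sinh_lt_mul_cosh t : 0 < t -> sinh t < t * cosh t.
Proof.
intros ht.
enough (0 * cosh 0 - sinh 0 < t * cosh t - sinh t) by (rewrite sinh_0 in *; lra).
apply (MVT_lt (fun t => t * cosh t - sinh t) (fun t => t * sinh t)); [lra| |].
- intros c _; auto_derive; auto; ring.
- intros c hc; pose proof (sinh_pos c ltac:(lra)); nra.
Qed.

Lemma sinh_div_id_increasing s t : 0 < s -> s < t -> sinh s / s < sinh t / t.
Proof.
intros hs hst.
apply (MVT_lt (fun t => sinh t / t) (fun t => (t * cosh t - sinh t) / t ^ 2)); [lra| |].
- intros c hc; auto_derive; [lra | field; lra].
- intros c hc; pose proof (sinh_lt_mul_cosh c ltac:(lra)).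
  apply Rdiv_lt_0_compat; nra.
Qed.

Lemma tanh_exp x : tanh x = 1 - 2 / (exp (2 * x) + 1).
Proof.
unfold tanh, sinh, cosh; rewrite exp_Ropp.
replace (2 * x) with (x + x) by ring; rewrite exp_plus.
pose proof (exp_pos x); field; split; nra.
Qed.

Lemma tanh_0 : tanh 0 = 0.
Proof. unfold tanh; rewrite sinh_0; field; rewrite cosh_0; lra. Qed.

Lemma tanh_lt_1 x : tanh x < 1.
Proof.
rewrite tanh_exp; pose proof (exp_pos (2 * x)).
enough (0 < 2 / (exp (2 * x) + 1)) by lra.
apply Rdiv_lt_0_compat; lra.
Qed.

Lemma tanh_increasing x y : x < y -> tanh x < tanh y.
Proof.
intros hxy; rewrite !tanh_exp.
assert (exp (2 * x) < exp (2 * y)) by (apply exp_increasing; lra).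
pose proof (exp_pos (2 * x)).
enough (2 / (exp (2 * y) + 1) < 2 / (exp (2 * x) + 1)) by lra.
apply Rmult_lt_reg_r with ((exp (2 * y) + 1) * (exp (2 * x) + 1)); [nra|].
field_simplify; lra.
Qed.

Lemma tanh_le x y : x <= y -> tanh x <= tanh y.
Proof. intros [hxy | <-]; [left; now apply tanh_increasing | lra]. Qed.

Lemma tanh_pos x : 0 < x -> 0 < tanh x.
Proof. intros hx; rewrite <- tanh_0; now apply tanh_increasing. Qed.

Lemma tanh_lt_id x : 0 < x -> tanh x < x.
Proof.
intros hx; unfold tanh; pose proof (cosh_pos x); pose proof (sinh_lt_mul_cosh x hx).
apply Rmult_lt_reg_r with (cosh x); [lra|]; field_simplify; lra.
Qed.

(* From [1 + 2x <= exp (2x)] and [tanh x = 1 - 2 / (exp (2x) + 1)]. *)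
Lemma div_1_add_le_tanh x : 0 <= x -> x / (1 + x) <= tanh x.
Proof.
intros hx; rewrite tanh_exp; pose proof (exp_ineq1_le (2 * x)).
apply Rmult_le_reg_r with ((1 + x) * (exp (2 * x) + 1)); [nra|].
field_simplify; lra.
Qed.

Lemma tanh_div_id_decreasing x y : 0 < x -> x < y -> tanh y / y < tanh x / x.
Proof.
intros hx hxy.
assert (hcoth : x * cosh x / sinh x < y * cosh y / sinh y).
{ apply (MVT_lt (fun t => t * cosh t / sinh t)
     (fun t => (sinh t * cosh t - t) / sinh t ^ 2)); [lra| |].
  - intros c hc; pose proof (sinh_pos c ltac:(lra)).
    pose proof (cosh_sq_sub_sinh_sq c).
    auto_derive; [lra|].
    field_simplify; [|lra..].
    replace (cosh c ^ 2) with (1 + sinh c ^ 2) by lra; field; lra.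
  (* the numerator of the derivative is sinh (2c) / 2 - c *)
  - intros c hc; pose proof (sinh_pos c ltac:(lra)).
    pose proof (sinh_double c); pose proof (sinh_gt_id (2 * c) ltac:(lra)).
    apply Rdiv_lt_0_compat; nra. }
pose proof (sinh_pos x hx); pose proof (sinh_pos y ltac:(lra)).
pose proof (cosh_pos x); pose proof (cosh_pos y).
unfold tanh.
replace (sinh y / cosh y / y) with (/ (y * cosh y / sinh y)) by (field; lra).
replace (sinh x / cosh x / x) with (/ (x * cosh x / sinh x)) by (field; lra).
apply Rinv_lt_contravar; [|exact hcoth].
apply Rmult_lt_0_compat; apply Rdiv_lt_0_compat; nra.
Qed.

Lemma tanh_ratio_increasing a b h h' : 0 < a -> a < b -> 0 < h -> h < h' ->
  tanh (a * h) / tanh (b * h) < tanh (a * h') / tanh (b * h').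
Proof.
intros ha hab hh hhh.
assert (hrat : forall t, 0 < t -> tanh (a * t) / tanh (b * t) =
  sinh (a * t) * cosh (b * t) / (cosh (a * t) * sinh (b * t))).
{ intros t ht; pose proof (sinh_pos (b * t) ltac:(nra)).
  pose proof (cosh_pos (a * t)); pose proof (cosh_pos (b * t)).
  unfold tanh; field; repeat split; lra. }
rewrite !hrat by lra.
apply (MVT_lt (fun t => sinh (a * t) * cosh (b * t) / (cosh (a * t) * sinh (b * t)))
              (fun t => (a * sinh (b * t) * cosh (b * t) - b * sinh (a * t) * cosh (a * t))
                          / (cosh (a * t) * sinh (b * t)) ^ 2)); [lra| |].
- intros c hc; pose proof (sinh_pos (b * c) ltac:(nra)); pose proof (cosh_pos (a * c)).
  pose proof (cosh_sq_sub_sinh_sq (a * c)); pose proof (cosh_sq_sub_sinh_sq (b * c)).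
  auto_derive; [apply Rmult_integral_contrapositive; split; lra|].
  field_simplify; [|lra..].
  replace (cosh (a * c) ^ 2) with (1 + sinh (a * c) ^ 2) by lra.
  replace (cosh (b * c) ^ 2) with (1 + sinh (b * c) ^ 2) by lra.
  field; split; nra.
(* the numerator of the derivative is (a sinh (2bc) - b sinh (2ac)) / 2 *)
- intros c hc; pose proof (sinh_pos (b * c) ltac:(nra)); pose proof (cosh_pos (a * c)).
  pose proof (sinh_div_id_increasing (2 * (a * c)) (2 * (b * c)) ltac:(nra) ltac:(nra)) as hs.
  rewrite !sinh_double in hs.
  apply Rdiv_lt_0_compat; [|apply pow_lt; nra].
  assert (hac : 0 < a * c) by nra.
  apply (Rmult_lt_compat_r (a * c * b)) in hs; [|nra].
  replace (2 * sinh (a * c) * cosh (a * c) / (2 * (a * c)) * (a * c * b))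
    with (b * sinh (a * c) * cosh (a * c)) in hs by (field; lra).
  replace (2 * sinh (b * c) * cosh (b * c) / (2 * (b * c)) * (a * c * b))
    with (a * sinh (b * c) * cosh (b * c)) in hs by (field; split; nra).
  lra.
Qed.

Lemma tanh_ge_of_ge t x : 0 <= t < 1 -> t / (1 - t) <= x -> t <= tanh x.
Proof.
intros ht hx.
assert (0 <= t / (1 - t)) by (apply Rdiv_le_0_compat; lra).
assert (hx' : t * (1 + x) <= x).
{ apply Rmult_le_compat_r with (r := 1 - t) in hx; [|lra].
  replace (t / (1 - t) * (1 - t)) with t in hx by (field; lra); nra. }
apply Rle_trans with (x / (1 + x)); [|apply div_1_add_le_tanh; lra].
apply Rmult_le_reg_r with (1 + x); [lra|].
replace (x / (1 + x) * (1 + x)) with x by (field; lra); lra.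
Qed.

Lemma Omega_pos K h : 0 < K -> 0 < h -> 0 < Omega K h.
Proof.
intros hK hh; apply sqrt_lt_R0, Rmult_lt_0_compat; [lra|].
apply tanh_pos; nra.
Qed.

Lemma Omega_continuous K h : 0 < K -> 0 < h -> continuity_pt (Omega K) h.
Proof.
intros hK hh; apply derivable_continuous_pt, ex_derive_Reals_0.
pose proof (tanh_pos (K * h) ltac:(nra)); pose proof (cosh_pos (K * h)).
unfold Omega, tanh in *; auto_derive.
repeat split; [lra | now apply Rmult_lt_0_compat].
Qed.

Lemma Omega_le_K K K' h : 0 < K -> K <= K' -> 0 <= h -> Omega K h <= Omega K' h.
Proof.
intros hK hKK' hh; unfold Omega; apply sqrt_le_1_alt.
assert (0 <= tanh (K * h)) by (rewrite <- tanh_0; apply tanh_le; nra).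
assert (tanh (K * h) <= tanh (K' * h)) by (apply tanh_le; nra).
nra.
Qed.

Lemma Omega_le_mul_sqrt K h : 0 < K -> 0 < h -> Omega K h <= K * sqrt h.
Proof.
intros hK hh; unfold Omega.
replace (K * sqrt h) with (sqrt (K * K * h)) by (rewrite sqrt_mult_alt, sqrt_square; nra).
apply sqrt_le_1_alt.
pose proof (tanh_lt_id (K * h) ltac:(nra)); nra.
Qed.

Lemma sqrt_le_Omega K h : 0 < K -> 0 < h -> sqrt (K ^ 2 * h / (1 + K * h)) <= Omega K h.
Proof.
intros hK hh; unfold Omega; apply sqrt_le_1_alt.
pose proof (div_1_add_le_tanh (K * h) ltac:(nra)).
replace (K ^ 2 * h / (1 + K * h)) with (K * (K * h / (1 + K * h))) by (field; nra).
apply Rmult_le_compat_l; lra.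
Qed.

Lemma sqrt_mul_le_Omega t K h : 0 <= t < 1 -> 0 < K -> t / (1 - t) <= K * h ->
  sqrt t * sqrt K <= Omega K h.
Proof.
intros ht hK hKh; unfold Omega; rewrite <- sqrt_mult_alt by lra.
apply sqrt_le_1_alt; rewrite Rmult_comm; apply Rmult_le_compat_l; [lra|].
now apply tanh_ge_of_ge.
Qed.

Lemma Omega_lt_sqrt_tanh Kj K h : 0 < Kj -> Kj < K -> 0 < h ->
  Omega Kj h < sqrt Kj * sqrt (tanh (K * h)).
Proof.
intros hj hjK hh; unfold Omega; rewrite <- sqrt_mult_alt by lra.
apply sqrt_lt_1_alt; split.
- apply Rmult_le_pos; [lra|]; left; apply tanh_pos; nra.
- apply Rmult_lt_compat_l; [lra|]; apply tanh_increasing; nra.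
Qed.

Lemma scaled_Omega_lt Kj K h : 0 < Kj -> Kj < K -> 0 < h ->
  Kj / K * Omega K h < Omega Kj h.
Proof.
intros hj hjK hh; unfold Omega.
assert (hdec := tanh_div_id_decreasing (Kj * h) (K * h) ltac:(nra) ltac:(nra)).
assert (0 < tanh (K * h)) by (apply tanh_pos; nra).
assert (hr : 0 <= Kj / K) by (left; apply Rdiv_lt_0_compat; lra).
rewrite <- (sqrt_pow2 (Kj / K) hr), <- sqrt_mult_alt by apply pow2_ge_0.
apply sqrt_lt_1_alt; split; [apply Rmult_le_pos; [apply pow2_ge_0 | nra]|].
apply Rmult_lt_compat_l with (r := Kj * Kj * h) in hdec; [|apply Rmult_lt_0_compat; nra].
replace (Kj * Kj * h * (tanh (K * h) / (K * h))) with ((Kj / K) ^ 2 * (K * tanh (K * h)))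
  in hdec by (field; lra).
replace (Kj * Kj * h * (tanh (Kj * h) / (Kj * h))) with (Kj * tanh (Kj * h))
  in hdec by (field; lra).
exact hdec.
Qed.

Lemma Omega_ratio_increasing Kj K h h' : 0 < Kj -> Kj < K -> 0 < h -> h < h' ->
  Omega Kj h / Omega K h < Omega Kj h' / Omega K h'.
Proof.
intros hj hjK hh hhh.
assert (hquot : forall t, 0 < t ->
  Omega Kj t / Omega K t = sqrt (Kj / K * (tanh (Kj * t) / tanh (K * t)))).
{ intros t ht; unfold Omega.
  pose proof (tanh_pos (Kj * t) ltac:(nra)); pose proof (tanh_pos (K * t) ltac:(nra)).
  rewrite <- sqrt_div_alt by nra; f_equal; field; lra. }
rewrite !hquot by lra; apply sqrt_lt_1_alt; split.
- pose proof (tanh_pos (Kj * h) ltac:(nra)); pose proof (tanh_pos (K * h) ltac:(nra)).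
  apply Rmult_le_pos; left; apply Rdiv_lt_0_compat; lra.
- apply Rmult_lt_compat_l; [apply Rdiv_lt_0_compat; lra|].
  now apply tanh_ratio_increasing.
Qed.

Lemma lt_of_Omega_add_eq K K' K3 h : 0 < K -> 0 < K' -> 0 < K3 -> 0 < h ->
  Omega K h + Omega K' h = Omega K3 h -> K < K3.
Proof.
intros hK hK' hK3 hh E.
destruct (Rlt_or_le K K3) as [lt | le]; [exact lt|].
pose proof (Omega_le_K K3 K h hK3 le ltac:(lra)); pose proof (Omega_pos K' h hK' hh).
lra.
Qed.

Section Triad.

Variables K1 K2 K3 : R.
Hypotheses (hK1 : 0 < K1) (hK2 : 0 < K2) (hK3 : 0 < K3).

Lemma resonance_necessary h : 0 < h -> Omega K1 h + Omega K2 h = Omega K3 h ->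
  K1 + K2 < K3 /\ K3 < (sqrt K1 + sqrt K2) ^ 2.
Proof.
intros hh E.
assert (h13 : K1 < K3) by exact (lt_of_Omega_add_eq K1 K2 K3 h hK1 hK2 hK3 hh E).
assert (h23 : K2 < K3) by (apply (lt_of_Omega_add_eq K2 K1 K3 h); lra).
pose proof (Omega_pos K3 h hK3 hh).
split.
- pose proof (scaled_Omega_lt K1 K3 h hK1 h13 hh).
  pose proof (scaled_Omega_lt K2 K3 h hK2 h23 hh).
  apply Rmult_lt_reg_r with (Omega K3 h / K3); [apply Rdiv_lt_0_compat; lra|].
  replace ((K1 + K2) * (Omega K3 h / K3))
    with (K1 / K3 * Omega K3 h + K2 / K3 * Omega K3 h) by (field; lra).
  replace (K3 * (Omega K3 h / K3)) with (Omega K3 h) by (field; lra).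
  lra.
- pose proof (Omega_lt_sqrt_tanh K1 K3 h hK1 h13 hh).
  pose proof (Omega_lt_sqrt_tanh K2 K3 h hK2 h23 hh).
  assert (ht : 0 < tanh (K3 * h)) by (apply tanh_pos; nra).
  assert (E3 : Omega K3 h = sqrt K3 * sqrt (tanh (K3 * h))) by (apply sqrt_mult; lra).
  pose proof (sqrt_lt_R0 _ ht).
  assert (sqrt K3 < sqrt K1 + sqrt K2) by nra.
  rewrite <- (pow2_sqrt K3) by lra; pose proof (sqrt_pos K3); nra.
Qed.

Lemma resonance_ratio_increasing h h' : K1 < K3 -> K2 < K3 -> 0 < h -> h < h' ->
  (Omega K1 h + Omega K2 h) / Omega K3 h < (Omega K1 h' + Omega K2 h') / Omega K3 h'.
Proof.
intros h13 h23 hh hhh.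
pose proof (Omega_ratio_increasing K1 K3 h h' hK1 h13 hh hhh).
pose proof (Omega_ratio_increasing K2 K3 h h' hK2 h23 hh hhh).
unfold Rdiv in *; lra.
Qed.

Lemma resonance_unique h h' : K1 < K3 -> K2 < K3 -> 0 < h -> 0 < h' ->
  Omega K1 h + Omega K2 h = Omega K3 h -> Omega K1 h' + Omega K2 h' = Omega K3 h' -> h = h'.
Proof.
intros h13 h23 hh hh' E E'.
assert (hone : forall t, 0 < t -> Omega K1 t + Omega K2 t = Omega K3 t ->
  (Omega K1 t + Omega K2 t) / Omega K3 t = 1).
{ intros t ht Et; rewrite Et; apply Rdiv_diag; pose proof (Omega_pos K3 t hK3 ht); lra. }
destruct (Rtotal_order h h') as [lt | [eq | gt]]; [exfalso | exact eq | exfalso].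
- pose proof (resonance_ratio_increasing h h' h13 h23 hh lt) as hr.
  rewrite (hone h hh E), (hone h' hh' E') in hr; lra.
- pose proof (resonance_ratio_increasing h' h h13 h23 hh' gt) as hr.
  rewrite (hone h hh E), (hone h' hh' E') in hr; lra.
Qed.

Lemma resonance_undershoot : K1 + K2 < K3 ->
  exists e, 0 < e /\ Omega K1 e + Omega K2 e < Omega K3 e.
Proof.
intros hlt.
set (S := K1 + K2) in *.
assert (hS : 0 < S) by (unfold S; lra).
(* chosen so that [S^2 (1 + K3 e) < K3^2] *)
set (e := (K3 ^ 2 - S ^ 2) / (2 * S ^ 2 * K3)).
assert (he : 0 < e) by (apply Rdiv_lt_0_compat; [nra | apply Rmult_lt_0_compat; nra]).
exists e; split; [exact he|].
pose proof (Omega_le_mul_sqrt K1 e hK1 he); pose proof (Omega_le_mul_sqrt K2 e hK2 he).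
enough (S * sqrt e < Omega K3 e) by (unfold S in *; lra).
eapply Rlt_le_trans; [|apply (sqrt_le_Omega K3 e hK3 he)].
replace (S * sqrt e) with (sqrt (S * S * e)) by (rewrite sqrt_mult_alt, sqrt_square; nra).
apply sqrt_lt_1_alt; split; [apply Rmult_le_pos; nra|].
assert (hKe : 0 < 1 + K3 * e) by nra.
apply Rmult_lt_reg_r with (1 + K3 * e); [exact hKe|].
replace (K3 ^ 2 * e / (1 + K3 * e) * (1 + K3 * e)) with (K3 ^ 2 * e) by (field; lra).
replace (S * S * e * (1 + K3 * e)) with ((S ^ 2 + K3 ^ 2) / 2 * e) by (unfold e; field; nra).
apply Rmult_lt_compat_r; nra.
Qed.

Lemma resonance_overshoot e : K3 < (sqrt K1 + sqrt K2) ^ 2 ->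
  exists M, e < M /\ Omega K3 M < Omega K1 M + Omega K2 M.
Proof.
intros hlt.
pose proof (sqrt_lt_R0 K1 hK1); pose proof (sqrt_lt_R0 K2 hK2).
set (S := sqrt K1 + sqrt K2) in *.
assert (hS : 0 < S) by (unfold S; lra).
(* any level [t] with [K3 / S^2 < t < 1] that [tanh (Kj M)] reaches will do *)
set (t := (1 + K3 / S ^ 2) / 2).
assert (hK3S : K3 / S ^ 2 < 1).
{ apply Rmult_lt_reg_r with (S ^ 2); [nra|].
  replace (K3 / S ^ 2 * S ^ 2) with K3 by (field; lra); lra. }
assert (0 < K3 / S ^ 2) by (apply Rdiv_lt_0_compat; nra).
assert (ht : K3 / S ^ 2 < t < 1) by (unfold t; lra).
set (x0 := t / (1 - t)).
assert (hx0 : 0 < x0) by (apply Rdiv_lt_0_compat; lra).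
set (M := Rabs e + x0 / K1 + x0 / K2 + 1).
assert (0 < x0 / K1) by (apply Rdiv_lt_0_compat; lra).
assert (0 < x0 / K2) by (apply Rdiv_lt_0_compat; lra).
assert (hMbig : e < M /\ x0 / K1 < M /\ x0 / K2 < M)
  by (unfold M; pose proof (Rle_abs e); pose proof (Rabs_pos e); lra).
exists M; split; [apply hMbig|].
assert (hM : 0 < M) by (pose proof (Rabs_pos e); unfold M; lra).
assert (hlow : forall K, 0 < K -> x0 / K < M -> sqrt t * sqrt K <= Omega K M).
{ intros K hK hKM; apply sqrt_mul_le_Omega; [lra | exact hK |].
  apply Rmult_lt_compat_l with (r := K) in hKM; [|lra].
  replace (K * (x0 / K)) with x0 in hKM by (field; lra); unfold x0 in *; lra. }
pose proof (hlow K1 hK1 (proj1 (proj2 hMbig))).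
pose proof (hlow K2 hK2 (proj2 (proj2 hMbig))).
enough (Omega K3 M < sqrt t * S) by (unfold S in *; lra).
unfold Omega; rewrite <- (sqrt_square S), <- sqrt_mult_alt by lra.
apply sqrt_lt_1_alt; split.
- apply Rmult_le_pos; [lra|]; left; apply tanh_pos; nra.
- pose proof (tanh_lt_1 (K3 * M)).
  assert (K3 < t * S ^ 2).
  { destruct ht as [ht _]; apply Rmult_lt_compat_r with (r := S ^ 2) in ht; [|nra].
    replace (K3 / S ^ 2 * S ^ 2) with K3 in ht by (field; lra); lra. }
  nra.
Qed.

Lemma resonance_exists : K1 + K2 < K3 -> K3 < (sqrt K1 + sqrt K2) ^ 2 ->
  exists h, 0 < h /\ Omega K1 h + Omega K2 h = Omega K3 h.
Proof.
intros hlow hup.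
destruct (resonance_undershoot hlow) as [e [he He]].
destruct (resonance_overshoot e hup) as [M [hM HM]].
destruct (IVT_interv (fun h => Omega K1 h + Omega K2 h - Omega K3 h) e M) as [z [hz Ez]];
  [| exact hM | lra | lra |].
- intros a ha.
  apply continuity_pt_minus; [apply continuity_pt_plus|]; apply Omega_continuous; lra.
- exists z; split; [lra | simpl in Ez; lra].
Qed.

End Triad.

Theorem theorem1 (K1 K2 K3 : R) (hK1 : 0 < K1) (hK2 : 0 < K2) (hK3 : 0 < K3) :
  ((exists h : R, 0 < h /\ Omega K1 h + Omega K2 h = Omega K3 h) <->
     (K1 + K2 < K3 /\ K3 < (sqrt K1 + sqrt K2) ^ 2)) /\
  (K1 + K2 < K3 /\ K3 < (sqrt K1 + sqrt K2) ^ 2 ->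
     forall h h' : R, 0 < h -> 0 < h' ->
       Omega K1 h + Omega K2 h = Omega K3 h ->
       Omega K1 h' + Omega K2 h' = Omega K3 h' -> h = h').
Proof.
split; [split|].
- intros [h [hh E]]; exact (resonance_necessary K1 K2 K3 hK1 hK2 hK3 h hh E).
- intros [hlow hup]; exact (resonance_exists K1 K2 K3 hK1 hK2 hK3 hlow hup).
- intros [hlow _] h h'; apply resonance_unique; lra.
Qed.
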